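(* Let $x\in[0,1)$, $\alpha\in(0,1)$ and $\lambda>0$, and suppose $\alpha<1-\frac{1}{\lambda(1-x)}$. Then the rumor has a positive steady state, i.e. the equation $\theta_1=(1-x)(1-\alpha)\frac{\lambda\theta_1}{1+\lambda\theta_1}$ has a positive solution $\theta_1>0$. This positive steady state is decreasing in $\alpha$ and in $x$ and increasing in $\lambda$, and it does not depend on the prevalence $\theta_0$ of the truth.
   Context: Model: a continuum population of mass $1$; a mass $x\in[0,1]$ of agents are of type $0$ (biased towards the truth, message $m=0$) and a mass $1-x$ are of type $1$ (biased towards the rumor, message $m=1$). In each type, a fraction $\alpha\in(0,1)$ of agents inspect messages. An agent who does not inspect believes (and transmits) only the message matching her type and ignores the other; an inspecting agent believes and transmits the truth upon receiving either message. Each agent has $k$ meetings per unit of time, each transmitting a message with rate $\nu$, and informed agents die at rate $\delta$ and are replaced by uninformed agents; set $\lambda=k\nu/\delta$. Let $\rho^{\alpha}_{0,0},\rho^{1-\alpha}_{0,0},\rho^{\alpha}_{1,0},\rho^{1-\alpha}_{1,1}\in[0,1]$ be respectively the fractions of inspecting type-0 agents believing the truth, non-inspecting type-0 agents believing the truth, inspecting type-1 agents believing the truth, and non-inspecting type-1 agents believing the rumor. The prevalences are $\theta_0=x[\alpha\rho^{\alpha}_{0,0}+(1-\alpha)\rho^{1-\alpha}_{0,0}]+(1-x)\alpha\rho^{\alpha}_{1,0}$ (truth) and $\theta_1=(1-x)(1-\alpha)\rho^{1-\alpha}_{1,1}$ (rumor). The dynamics are $\dot\rho^{\alpha}_{0,0}=x\alpha[(1-\rho^{\alpha}_{0,0})k\nu(\theta_0+\theta_1)-\rho^{\alpha}_{0,0}\delta]$,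 $\dot\rho^{1-\alpha}_{0,0}=x(1-\alpha)[(1-\rho^{1-\alpha}_{0,0})k\nu\theta_0-\rho^{1-\alpha}_{0,0}\delta]$, $\dot\rho^{\alpha}_{1,0}=(1-x)\alpha[(1-\rho^{\alpha}_{1,0})k\nu(\theta_0+\theta_1)-\rho^{\alpha}_{1,0}\delta]$, $\dot\rho^{1-\alpha}_{1,1}=(1-x)(1-\alpha)[(1-\rho^{1-\alpha}_{1,1})k\nu\theta_1-\rho^{1-\alpha}_{1,1}\delta]$. A steady state is a rest point of these dynamics; at a steady state $\rho^{1-\alpha}_{1,1}=\frac{\lambda\theta_1}{1+\lambda\theta_1}$, so the steady-state rumor prevalence solves $\theta_1=(1-x)(1-\alpha)\frac{\lambda\theta_1}{1+\lambda\theta_1}$. *)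

From Stdlib Require Import Reals Lra.
Open Scope R_scope.

(* Steady-state equation for the rumor prevalence theta1 (lam = k nu / delta). *)
Definition rumor_eq (x a lam t : R) : Prop :=
  t = (1 - x) * (1 - a) * (lam * t / (1 + lam * t)).

Definition params_ok (x a lam : R) : Prop :=
  0 <= x < 1 /\ 0 < a < 1 /\ 0 < lam /\ a < 1 - 1 / (lam * (1 - x)).

Definition theta0 (x a r00a r00n r10a : R) : R :=
  x * (a * r00a + (1 - a) * r00n) + (1 - x) * a * r10a.
Definition theta1 (x a r11 : R) : R := (1 - x) * (1 - a) * r11.

Definition rest_point (x a k nu delta r00a r00n r10a r11 : R) : Prop :=
  let th0 := theta0 x a r00a r00n r10a in
  let th1 := theta1 x a r11 in
  x * a * ((1 - r00a) * k * nu * (th0 + th1) - r00a * delta) = 0 /\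
  x * (1 - a) * ((1 - r00n) * k * nu * th0 - r00n * delta) = 0 /\
  (1 - x) * a * ((1 - r10a) * k * nu * (th0 + th1) - r10a * delta) = 0 /\
  (1 - x) * (1 - a) * ((1 - r11) * k * nu * th1 - r11 * delta) = 0.

Definition in01 (r : R) : Prop := 0 <= r <= 1.

(* A positive root t of t = c λt/(1 + λt) can be cancelled: 1 + λt = cλ,
   so the positive steady state is the explicit level t = c - 1/λ with
   c = (1 - x)(1 - α), which is positive exactly under the threshold
   hypothesis and is visibly monotone in α, x and λ. *)
From Stdlib Require Import Reals Lra.
Open Scope R_scope.

Definition rumor_level (x a lam : R) : R := (1 - x) * (1 - a) - / lam.

Lemma rumor_eq_pos_level x a lam t :
  0 < lam -> 0 < t -> rumor_eq x a lam t -> t = rumor_level x a lam.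
Proof.
  unfold rumor_eq, rumor_level; intros Hlam Ht E.
  assert (Hden : 0 < 1 + lam * t) by nra.
  assert (E' : t * (1 + lam * t) = (1 - x) * (1 - a) * (lam * t)).
  { rewrite E at 1; field; lra. }
  apply Rmult_eq_reg_l with (lam * t); [|nra].
  field_simplify; [nra | lra].
Qed.

Lemma rumor_level_eq x a lam :
  0 < lam -> 0 < rumor_level x a lam -> rumor_eq x a lam (rumor_level x a lam).
Proof.
  unfold rumor_eq, rumor_level; intros Hlam Hpos.
  assert (Hden : 1 + lam * ((1 - x) * (1 - a) - / lam) = lam * ((1 - x) * (1 - a)))
    by (field; lra).
  assert (Hc : 0 < (1 - x) * (1 - a)) by (pose proof (Rinv_0_lt_compat lam Hlam); lra).
  rewrite Hden; field; nra.
Qed.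

Lemma params_ok_rumor_level_pos x a lam :
  params_ok x a lam -> 0 < rumor_level x a lam.
Proof.
  unfold params_ok, rumor_level; intros [[Hx0 Hx1] [_ [Hlam Hthr]]].
  assert (Hthr' : 1 / (lam * (1 - x)) * (1 - x) < (1 - a) * (1 - x))
    by (apply Rmult_lt_compat_r; lra).
  replace (1 / (lam * (1 - x)) * (1 - x)) with (/ lam) in Hthr' by (field; lra).
  lra.
Qed.

Lemma rumor_level_decr_a x a a' lam :
  x < 1 -> a < a' -> rumor_level x a' lam < rumor_level x a lam.
Proof. unfold rumor_level; intros; nra. Qed.

Lemma rumor_level_decr_x x x' a lam :
  a < 1 -> x < x' -> rumor_level x' a lam < rumor_level x a lam.
Proof. unfold rumor_level; intros; nra. Qed.

Lemma rumor_level_incr_lam x a lam lam' :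
  0 < lam -> lam < lam' -> rumor_level x a lam < rumor_level x a lam'.
Proof.
  unfold rumor_level; intros Hlam Hlt.
  assert (/ lam' < / lam) by (apply Rinv_lt_contravar; nra).
  lra.
Qed.

Lemma rest_fraction_eq k nu delta t r :
  0 < delta -> 0 <= k * nu * t -> (1 - r) * k * nu * t - r * delta = 0 ->
  r = k * nu / delta * t / (1 + k * nu / delta * t).
Proof.
  intros Hdelta Hflow Hrest.
  apply Rmult_eq_reg_r with (delta + k * nu * t); [|lra].
  field_simplify; [lra | split; lra].
Qed.

Theorem lemma1 :
  (* existence (and uniqueness) of a positive steady state *)
  (forall x a lam, params_ok x a lam ->
     exists t, 0 < t /\ rumor_eq x a lam t /\
       (forall t', 0 < t' -> rumor_eq x a lam t' -> t' = t)) /\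
  (* strictly decreasing in alpha *)
  (forall x a a' lam t t', params_ok x a lam -> params_ok x a' lam -> a < a' ->
     0 < t -> rumor_eq x a lam t -> 0 < t' -> rumor_eq x a' lam t' -> t' < t) /\
  (* strictly decreasing in x *)
  (forall x x' a lam t t', params_ok x a lam -> params_ok x' a lam -> x < x' ->
     0 < t -> rumor_eq x a lam t -> 0 < t' -> rumor_eq x' a lam t' -> t' < t) /\
  (* strictly increasing in lambda *)
  (forall x a lam lam' t t', params_ok x a lam -> params_ok x a lam' -> lam < lam' ->
     0 < t -> rumor_eq x a lam t -> 0 < t' -> rumor_eq x a lam' t' -> t < t') /\
  (* independence of theta0: at any rest point of the full dynamics with positive
     rumor prevalence, theta1 solves the theta0-free steady-state equation
     (hence equals the unique positive solution above) *)
  (forall x a k nu delta r00a r00n r10a r11,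
     0 < k -> 0 < nu -> 0 < delta -> params_ok x a (k * nu / delta) ->
     in01 r00a -> in01 r00n -> in01 r10a -> in01 r11 ->
     rest_point x a k nu delta r00a r00n r10a r11 ->
     0 < theta1 x a r11 ->
     rumor_eq x a (k * nu / delta) (theta1 x a r11)).
Proof.
  split; [|split; [|split; [|split]]].
  - intros x a lam P.
    pose proof (params_ok_rumor_level_pos _ _ _ P) as Hpos.
    destruct P as [_ [_ [Hlam _]]].
    exists (rumor_level x a lam); split; [exact Hpos | split].
    + exact (rumor_level_eq _ _ _ Hlam Hpos).
    + intros t' Ht' E'; exact (rumor_eq_pos_level _ _ _ _ Hlam Ht' E').
  - intros x a a' lam t t' [[_ Hx] [_ [Hlam _]]] _ Ha Ht E Ht' E'.
    rewrite (rumor_eq_pos_level _ _ _ _ Hlam Ht E), (rumor_eq_pos_level _ _ _ _ Hlam Ht' E').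
    exact (rumor_level_decr_a _ _ _ _ Hx Ha).
  - intros x x' a lam t t' [_ [[_ Ha] [Hlam _]]] _ Hx Ht E Ht' E'.
    rewrite (rumor_eq_pos_level _ _ _ _ Hlam Ht E), (rumor_eq_pos_level _ _ _ _ Hlam Ht' E').
    exact (rumor_level_decr_x _ _ _ _ Ha Hx).
  - intros x a lam lam' t t' [_ [_ [Hlam _]]] [_ [_ [Hlam' _]]] Hl Ht E Ht' E'.
    rewrite (rumor_eq_pos_level _ _ _ _ Hlam Ht E), (rumor_eq_pos_level _ _ _ _ Hlam' Ht' E').
    exact (rumor_level_incr_lam _ _ _ _ Hlam Hl).
  - intros x a k nu delta r00a r00n r10a r11 Hk Hnu Hdelta [[_ Hx] [[_ Ha] _]]
      _ _ _ _ [_ [_ [_ Hrest]]] Hth.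
    unfold rumor_eq, theta1 in *.
    assert (Hc : (1 - x) * (1 - a) <> 0) by (apply Rmult_integral_contrapositive; lra).
    apply Rmult_integral in Hrest as [Hc0 | Hrest]; [contradiction|].
    assert (Hflow : 0 <= k * nu * ((1 - x) * (1 - a) * r11))
      by (apply Rmult_le_pos; [apply Rmult_le_pos|]; lra).
    rewrite (rest_fraction_eq _ _ _ _ _ Hdelta Hflow Hrest) at 1.
    reflexivity.
Qed.
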